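(* Let $\sigma : X^* \to M$ be a finite monoid choice of generators for a monoid $M$. Then $M$ is finite if and only if the loop problem $L_\sigma(M)$ is a regular language. Likewise, if $\sigma : X^+ \to S$ is a finite semigroup choice of generators for a semigroup $S$, then $S$ is finite if and only if $L_\sigma(S)$ is regular.
   Context: Maps are written on the right ($u\sigma$ is the image of $u$ under $\sigma$). For an alphabet $X$, $X^*$ denotes the free monoid on $X$ and $X^+$ the free semigroup on $X$. A (monoid) choice of generators for a monoid $M$ is a surjective monoid morphism $\sigma : X^* \to M$; it is finite if $X$ is finite. Let $\overline{X} = \{\overline{x} : x \in X\}$ be a set of new symbols and $\hat{X} = X \cup \overline{X}$. The loop automaton of $M$ with respect to $\sigma$ is the directed edge-labelled graph with vertex set $M$ having, for every $a \in M$ and $x \in X$, an edge from $a$ to $a(x\sigma)$ labelled $x$ and an edge from $a(x\sigma)$ to $a$ labelled $\overline{x}$; labels of paths are concatenations of edge labels. The loop problem $L_\sigma(M) \subseteq \hat{X}^*$ is the set of labels of paths from the identity of $M$ to itself. For a semigroup $S$, a (semigroup) choice of generators is a surjective morphism $\sigma : X^+ \to S$; let $S^1$ be $S$ with a new identity adjoined (even if $S$ already has one) and $\sigma^1 : X^* \to S^1$ the unique extension of $\sigma$; the loop problem of $S$ is $L_\sigma(S) := L_{\sigma^1}(S^1)$. *)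

From Stdlib Require List.
From mathcomp Require Import all_boot.
Set Implicit Arguments. Unset Strict Implicit. Unset Printing Implicit Defensive.

Definition finite_type (T : Type) : Prop := exists s : list T, forall t : T, List.In t s.

Definition language (A : Type) := seq A -> Prop.

Definition dfa_run (A Q : Type) (delta : Q -> A -> Q) (q : Q) (w : seq A) : Q :=
  foldl delta q w.

Definition regular (A : finType) (L : language A) : Prop :=
  exists (Q : finType) (q0 : Q) (delta : Q -> A -> Q) (F : pred Q),
    forall w : seq A, L w <-> F (dfa_run delta q0 w).

Definition is_monoid (M : Type) (mul : M -> M -> M) (one : M) : Prop :=
  (forall a b c, mul a (mul b c) = mul (mul a b) c) /\
  (forall a, mul one a = a) /\ (forall a, mul a one = a).

Definition is_semigroup (S : Type) (mul : S -> S -> S) : Prop :=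
  forall a b c, mul a (mul b c) = mul (mul a b) c.

Definition monoid_choice (X M : Type) (mul : M -> M -> M) (one : M)
  (sigma : seq X -> M) : Prop :=
  sigma [::] = one /\
  (forall u v, sigma (u ++ v) = mul (sigma u) (sigma v)) /\
  (forall m, exists w, sigma w = m).

(* sigma : X^+ -> S is a surjective semigroup morphism; X^+ is represented by the
   nonempty words, and sigma's values on the empty word are irrelevant. *)
Definition semigroup_choice (X S : Type) (mul : S -> S -> S)
  (sigma : seq X -> S) : Prop :=
  (forall u v, u <> [::] -> v <> [::] -> sigma (u ++ v) = mul (sigma u) (sigma v)) /\
  (forall s, exists w, w <> [::] /\ sigma w = s).

(* Hat X = X ∪ X-bar: inl x is x, inr x is x-bar. *)
Definition hat (X : Type) := (X + X)%type.

(* Edges of the loop automaton: a --x--> a(xσ), a(xσ) --xbar--> a.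
   gen x is the generator image xσ (= σ of the one-letter word). *)
Definition loop_edge (X M : Type) (mul : M -> M -> M) (gen : X -> M)
  (a : M) (l : hat X) (b : M) : Prop :=
  match l with
  | inl x => b = mul a (gen x)
  | inr x => a = mul b (gen x)
  end.

Fixpoint loop_path (X M : Type) (mul : M -> M -> M) (gen : X -> M)
  (a : M) (w : seq (hat X)) (b : M) : Prop :=
  match w with
  | [::] => a = b
  | l :: w' => exists c, loop_edge mul gen a l c /\ loop_path mul gen c w' b
  end.

Definition loop_problem (X M : Type) (mul : M -> M -> M) (one : M)
  (sigma : seq X -> M) : language (hat X) :=
  fun w => loop_path mul (fun x => sigma [:: x]) one w one.

(* S^1 : S with a new identity adjoined (None is the new identity). *)
Definition adj_mul (S : Type) (mul : S -> S -> S) (a b : option S) : option S :=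
  match a, b with
  | None, _ => b
  | _, None => a
  | Some a', Some b' => Some (mul a' b')
  end.

Definition sigma1 (X S : Type) (sigma : seq X -> S) (w : seq X) : option S :=
  if w is [::] then None else Some (sigma w).

Definition semigroup_loop_problem (X S : Type) (mul : S -> S -> S)
  (sigma : seq X -> S) : language (hat X) :=
  loop_problem (adj_mul mul) None (sigma1 sigma).

Definition hatF (X : finType) : finType := (X + X)%type.

(** If M is finite, the loop automaton is a finite nondeterministic automaton
    and the subset construction makes its language regular.  Conversely, a word
    u followed by the reversed barred copy of v is a loop exactly when
    uσ = vσ; so if a DFA recognises the loop problem, two words of X^* that
    drive it from the start to the same state have the same image in M, and M
    has at most as many elements as the DFA has states.  The semigroup case is
    the monoid case for S^1, which is finite exactly when S is. *)
From Stdlib Require List.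
From mathcomp Require Import all_boot boolp.
Set Implicit Arguments. Unset Strict Implicit. Unset Printing Implicit Defensive.

Lemma finite_type_surj (Q : finType) (T : Type) (g : Q -> T) :
  (forall t, exists q, g q = t) -> finite_type T.
Proof.
move=> g_surj; exists (map g (enum Q)) => t.
have [q <-] := g_surj t; apply: List.in_map.
have : q \in enum Q by rewrite mem_enum.
elim: (enum Q) => //= p s IHs; rewrite in_cons => /orP[/eqP->|/IHs]; by [left|right].
Qed.

Lemma finite_type_factor (A T : Type) (Q : finType) (f : A -> T) (r : A -> Q) (a0 : A) :
  (forall t, exists a, f a = t) -> (forall a b, r a = r b -> f a = f b) ->
  finite_type T.
Proof.
move=> f_surj f_factors.
have /choice[g gP] : forall q, exists t, forall a, r a = q -> t = f a.
  move=> q; have [[a ra] | no_a] := pselect (exists a, r a = q).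
    by exists (f a) => b rb; apply: f_factors; rewrite ra rb.
  by exists (f a0) => b rb; case: no_a; exists b.
apply: (finite_type_surj (g := g)) => t.
by have [a <-] := f_surj t; exists (r a); rewrite (gP _ a).
Qed.

Lemma finite_type_option (T : Type) : finite_type (option T) <-> finite_type T.
Proof.
split=> [[s sP] | [s sP]].
  exists (pmap id s) => t; move: (sP (Some t)).
  elim: s {sP} => //= -[x|] s IHs [|/IHs] //=; [by case=> ->; left | by right].
exists (None :: map (@Some T) s) => -[t|]; last by left.
by right; apply: List.in_map.
Qed.

Lemma regular_ext (A : finType) (L1 L2 : language A) :
  (forall w, L1 w <-> L2 w) -> regular L1 -> regular L2.
Proof.
move=> L12 [Q [q0 [delta [F accept]]]]; exists Q, q0, delta, F => w.
exact: iff_trans (iff_sym (L12 w)) (accept w).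
Qed.

Section RelPath.

Variables (T A : Type) (step : T -> A -> T -> Prop).

Fixpoint rel_path (p : T) (w : seq A) (q : T) : Prop :=
  if w is l :: w' then exists2 c, step p l c & rel_path c w' q else p = q.

Lemma rel_path_cat u v p q :
  rel_path p (u ++ v) q <-> exists2 c, rel_path p u c & rel_path c v q.
Proof.
elim: u p => [|l u IHu] p /=; first by split=> [|[c ->]]; [exists p|].
split=> [[c pc /IHu[d cd dq]] | [d [c pc cd] dq]].
  by exists d => //; exists c.
by exists c => //; apply/IHu; exists d.
Qed.

End RelPath.

Lemma rel_path_lift (T A Q : Type) (step : T -> A -> T -> Prop) (f : Q -> T) :
  (forall t, exists i, f i = t) -> forall i w q,
  rel_path step (f i) w q <->
  exists2 j, f j = q & rel_path (fun i l j => step (f i) l (f j)) i w j.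
Proof.
move=> f_surj i w q.
elim: w i => [|l w IHw] i /=; first by split=> [<-|[j <- ->]]; [exists i|].
split=> [[c ic] | [j jq [k ik kj]]].
  have [k kc] := f_surj c; subst c; case/IHw => j jq kj.
  by exists j => //; exists k.
by exists (f k) => //; apply/IHw; exists j.
Qed.

Lemma loop_pathE (X M : Type) (mul : M -> M -> M) (gen : X -> M) a w b :
  loop_path mul gen a w b <-> rel_path (loop_edge mul gen) a w b.
Proof.
elim: w a => [|l w IHw] a //=.
by split=> [[c [ac /IHw cb]] | [c ac /IHw cb]]; exists c.
Qed.

Section SubsetConstruction.

Variables (A Q : finType) (step : Q -> A -> Q -> Prop) (init final : Q -> Prop).

Definition subset_step (P : {set Q}) (l : A) : {set Q} :=
  [set j | `[< exists2 i, i \in P & step i l j >]].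

Lemma subset_runP w P q :
  q \in dfa_run subset_step P w <-> exists2 p, p \in P & rel_path step p w q.
Proof.
rewrite /dfa_run; elim: w P => [|l w IHw] P /=.
  by split=> [qP | [p pP <-]] //; exists q.
apply: iff_trans (IHw _) _.
split=> [[c /[!inE] /asboolP[p pP pc] cq] | [p pP [c pc cq]]].
  by exists p => //; exists c.
by exists c => //; rewrite inE; apply/asboolP; exists p.
Qed.

Lemma nfa_regular :
  regular (fun w => exists p q, [/\ init p, final q & rel_path step p w q]).
Proof.
exists {set Q}, [set p | `[< init p >]], subset_step,
  (fun P : {set Q} => `[< exists2 q, q \in P & final q >]) => w.
split=> [[p [q [ip fq pq]]] | /asboolP[q /subset_runP[p /[!inE] /asboolP ip pq] fq]].
  apply/asboolP; exists q => //; apply/subset_runP.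
  by exists p => //; rewrite inE; apply/asboolP.
by exists p, q.
Qed.

End SubsetConstruction.

Lemma finite_closed_paths_regular (A : finType) (T : Type)
    (step : T -> A -> T -> Prop) (t0 : T) :
  finite_type T -> regular (fun w => rel_path step t0 w t0).
Proof.
move=> [s sP].
pose f (i : 'I_(length s)) := List.nth i s t0.
have f_surj t : exists i, f i = t.
  have [n [/ltP n_lt <-]] := List.In_nth s t t0 (sP t).
  by exists (Ordinal n_lt).
apply: regular_ext (nfa_regular (fun i l j => step (f i) l (f j))
                      (fun i => f i = t0) (fun i => f i = t0)) => w.
split=> [[i [j [fi fj ij]]] | ].
  by rewrite -{1}fi; apply/(rel_path_lift _ f_surj); exists j.
have [i fi] := f_surj t0; rewrite -{1}fi => /(rel_path_lift _ f_surj)[j fj ij].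
by exists i, j.
Qed.

Section LoopProblem.

Variables (X : finType) (M : Type) (mul : M -> M -> M) (one : M) (sigma : seq X -> M).
Hypotheses (monoid_M : is_monoid mul one) (sigma_choice : monoid_choice mul one sigma).

Local Notation edge := (loop_edge mul (fun x => sigma [:: x])).

Lemma rel_path_map_inl u a b :
  rel_path edge a (map inl u) b <-> b = mul a (sigma u).
Proof.
case: monoid_M sigma_choice => [mulA [_ mul1]] [sigma0 [sigmaM _]].
elim: u a b => [|x u IHu] a b /=; first by rewrite sigma0 mul1; split=> ->.
rewrite -[x :: u]cat1s sigmaM mulA.
split=> [[c -> /IHu //] | ->].
by exists (mul a (sigma [:: x])) => //; apply/IHu.
Qed.

Lemma rel_path_rev_map_inr v a b :
  rel_path edge a (rev (map inr v)) b <-> a = mul b (sigma v).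
Proof.
case: monoid_M sigma_choice => [mulA [_ mul1]] [sigma0 [sigmaM _]].
elim: v a b => [|x v IHv] a b /=; first by rewrite sigma0 mul1.
rewrite rev_cons -cats1 rel_path_cat -[x :: v]cat1s sigmaM mulA.
split=> [[c /IHv -> [d /= -> ->]] | ->] //.
by exists (mul b (sigma [:: x])); [apply/IHv | exists b].
Qed.

Lemma loop_problem_inl_rev_inr u v :
  loop_problem mul one sigma (map inl u ++ rev (map inr v)) <-> sigma u = sigma v.
Proof.
case: monoid_M => _ [one_mul _].
rewrite /loop_problem loop_pathE rel_path_cat.
split=> [[c /rel_path_map_inl -> /rel_path_rev_map_inr] | uv].
  by rewrite !one_mul.
exists (sigma u); first by apply/rel_path_map_inl; rewrite one_mul.
by apply/rel_path_rev_map_inr; rewrite one_mul.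
Qed.

Lemma finite_loop_problem_regular :
  finite_type M -> @regular (hatF X) (loop_problem mul one sigma).
Proof.
move=> finM; apply: regular_ext (finite_closed_paths_regular edge one finM) => w.
exact: iff_sym (loop_pathE _ _ _ _ _).
Qed.

Lemma regular_loop_problem_finite :
  @regular (hatF X) (loop_problem mul one sigma) -> finite_type M.
Proof.
case: sigma_choice => _ [_ sigma_surj] [Q [q0 [delta [F accept]]]].
pose run u := dfa_run delta q0 (map inl u).
apply: (finite_type_factor (r := run) [::] sigma_surj) => u v run_uv.
have /accept : loop_problem mul one sigma (map inl u ++ rev (map inr u)).
  exact/loop_problem_inl_rev_inr.
rewrite /dfa_run foldl_cat -[foldl _ _ (map inl u)]/(run u) run_uv -foldl_cat.
by move/accept/loop_problem_inl_rev_inr.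
Qed.

Lemma finite_iff_regular_loop_problem :
  finite_type M <-> @regular (hatF X) (loop_problem mul one sigma).
Proof.
by split; [apply: finite_loop_problem_regular | apply: regular_loop_problem_finite].
Qed.

End LoopProblem.

Section AdjoinIdentity.

Variables (X S : Type) (mul : S -> S -> S) (sigma : seq X -> S).

Lemma adj_mul_monoid : is_semigroup mul -> is_monoid (adj_mul mul) None.
Proof.
move=> mulA; split; last by split=> // -[].
by move=> [a|] [b|] [c|] //=; rewrite mulA.
Qed.

Lemma sigma1_monoid_choice :
  semigroup_choice mul sigma -> monoid_choice (adj_mul mul) None (sigma1 sigma).
Proof.
move=> [sigmaM sigma_surj]; split=> //; split.
  move=> [|x u] [|y v] //=; first by rewrite cats0.
  by rewrite -sigmaM.
move=> [s|]; last by exists [::].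
by have [[|x w] [//= _ <-]] := sigma_surj s; exists (x :: w).
Qed.

End AdjoinIdentity.

Theorem theorem6p1 :
  (forall (X : finType) (M : Type) (mul : M -> M -> M) (one : M) (sigma : seq X -> M),
     is_monoid mul one -> monoid_choice mul one sigma ->
     (finite_type M <-> @regular (hatF X) (loop_problem mul one sigma))) /\
  (forall (X : finType) (S : Type) (mul : S -> S -> S) (sigma : seq X -> S),
     is_semigroup mul -> semigroup_choice mul sigma ->
     (finite_type S <-> @regular (hatF X) (semigroup_loop_problem mul sigma))).
Proof.
split=> [X M mul one sigma | X S mul sigma semigroup_S sigma_choice].
  exact: finite_iff_regular_loop_problem.
apply: iff_trans (iff_sym (finite_type_option S)) _.
apply: finite_iff_regular_loop_problem.
  exact: adj_mul_monoid.
exact: sigma1_monoid_choice.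
Qed.
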